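(* Let $N\ge1$, $K\ge1$, $n_v\ge0$, $L\ge1$, let $\mathbf{T}\in[0,1]^{K\times K}$ be row-stochastic, and let $(X(0),X(1),\dots,X(L))$ be the probabilistic cellular automaton with local transition matrix $\mathbf{T}$ started from an arbitrary initial distribution. Define $\mathbf{A}_\infty=\frac{1}{LN}\sum_{t=1}^L\sum_{n=1}^N\mathbb{E}[\varphi_{n,t-1}^\top\varphi_{n,t-1}]\in\mathbb{R}^{K\times K}$ and, for $k\in[K]$, $\mathbf{b}_\infty(\cdot,k)=\frac{1}{LN}\sum_{t=1}^L\sum_{n=1}^N\mathbb{E}[\varphi_{n,t-1}^\top c_{n,t}(k)]\in\mathbb{R}^{K}$. If $\mathbf{A}_\infty$ is nonsingular, then $\mathbf{T}=\mathbf{A}_\infty^{-1}\mathbf{b}_\infty$.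
   Context: Vertices $[N]$ are arranged on a cycle; $V_n\subset[N]$ is the set of residues modulo $N$ of $n-n_v,\dots,n+n_v$. The chain $X(t)\in[K]^N$ evolves as follows: given $X(t)$, the coordinates $X_n(t+1)$ are conditionally independent with $\mathbb{P}(X_n(t+1)=k\mid X(t))=\varphi_{n,t}\mathbf{T}_{\cdot,k}$, where $\varphi_{n,t}\in\mathbb{R}^{1\times K}$ is the row vector $\varphi_{n,t}(j)=\frac{1}{|V_n|}\sum_{i\in V_n}\mathbf{1}\{X_i(t)=j\}$. Also $c_{n,t}(k)=\mathbf{1}\{X_n(t)=k\}$. $\mathbf{b}_\infty$ is the $K\times K$ matrix with columns $\mathbf{b}_\infty(\cdot,k)$. *)

(* Probabilistic cellular automaton on a cycle of N sites,
   K states; finite state space, so the law of the chain is computed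
   exactly through its finite-dimensional marginals. *)
From HB Require Import structures.
From mathcomp Require Import all_boot all_order all_algebra.
Set Implicit Arguments. Unset Strict Implicit. Unset Printing Implicit Defensive.
Import Order.TTheory GRing.Theory Num.Theory.
Local Open Scope ring_scope.

Definition config (N K : nat) := {ffun 'I_N -> 'I_K}.

(* V_n = residues mod N of n - nv, ..., n + nv ; (N.-1)*nv is added so that
   the nat subtraction is not needed: n - nv + d = n + d + (N-1) nv  (mod N). *)
Definition nbhd (N nv : nat) (n : 'I_N) : {set 'I_N} :=
  [set i : 'I_N | [exists d : 'I_((2 * nv + 1)%N),
      nat_of_ord i == ((n + d + N.-1 * nv) %% N)%N]].

Definition phi (R : fieldType) (N K nv : nat) (n : 'I_N) (x : config N K)
  : 'rV[R]_K :=
  \row_(j < K) ((#|nbhd nv n|%:R)^-1 *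
                \sum_(i in nbhd nv n) (if x i == j then 1 else 0)).

Arguments phi {R N K} nv n x.

Definition trans (R : fieldType) (N K nv : nat) (T : 'M[R]_K)
  (x y : config N K) : R :=
  \prod_(n < N) (phi nv n x *m T) 0 (y n).

Arguments trans {R N K} nv T x y.

Fixpoint law (R : fieldType) (N K nv : nat) (T : 'M[R]_K)
  (mu0 : {ffun config N K -> R}) (t : nat) : config N K -> R :=
  match t with
  | 0 => fun x => mu0 x
  | t'.+1 => fun y => \sum_(x : config N K) law nv T mu0 t' x * trans nv T x y
  end.

Arguments law {R N K} nv T mu0 t _.

Definition row_stochastic (R : numFieldType) (K : nat) (T : 'M[R]_K) : Prop :=
  (forall i j, 0 <= T i j <= 1) /\ (forall i, \sum_(j < K) T i j = 1).

Definition is_distribution (R : numFieldType) (X : finType) (mu : {ffun X -> R})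
  : Prop := (forall x, 0 <= mu x) /\ \sum_x mu x = 1.

Definition A_inf (R : fieldType) (N K nv L : nat) (T : 'M[R]_K)
  (mu0 : {ffun config N K -> R}) : 'M[R]_K :=
  ((L * N)%N%:R)^-1 *:
   \sum_(t < L) \sum_(n < N) \sum_(x : config N K)
      law nv T mu0 t x *: ((phi nv n x)^T *m phi nv n x).

Arguments A_inf {R N K} nv L T mu0.

(* b_infty(j,k) = 1/(LN) sum_{t=1}^L sum_n E[phi_{n,t-1}(j) c_{n,t}(k)],
   expectation over the joint law of (X(t-1), X(t)) *)
Definition b_inf (R : fieldType) (N K nv L : nat) (T : 'M[R]_K)
  (mu0 : {ffun config N K -> R}) : 'M[R]_K :=
  \matrix_(j < K, k < K)
   (((L * N)%N%:R)^-1 *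
    \sum_(t < L) \sum_(n < N) \sum_(x : config N K) \sum_(y : config N K)
      law nv T mu0 t x * trans nv T x y * phi nv n x 0 j *
      (if y n == k then 1 else 0)).

Arguments b_inf {R N K} nv L T mu0.

(* Given X(t-1) = x, the site X_n(t) has law phi_n(x) T, so the conditional
   expectation of c_{n,t} is phi_{n,t-1} T.  Hence every summand of b_infty
   equals the corresponding summand of A_infty multiplied by T, i.e.
   b_infty = A_infty T, and T = A_infty^-1 b_infty once A_infty is invertible.
   The identity b_infty = A_infty T only uses that the rows of T sum to 1. *)
From HB Require Import structures.
From mathcomp Require Import all_boot all_order all_algebra.
Set Implicit Arguments. Unset Strict Implicit. Unset Printing Implicit Defensive.
Import Order.TTheory GRing.Theory Num.Theory.
Local Open Scope ring_scope.

Lemma sum_ffun_prod_indicator (R : comPzRingType) (I J : finType)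
    (f : I -> J -> R) (i0 : I) (j0 : J) :
  (forall i, \sum_j f i j = 1) ->
  \sum_(y : {ffun I -> J}) (\prod_i f i (y i)) * (y i0 == j0)%:R = f i0 j0.
Proof.
move=> f_sum1.
pose g i j := if i == i0 then f i j * (j == j0)%:R else f i j.
have prod_g : \prod_i \sum_j g i j = f i0 j0.
  rewrite (bigD1 i0) //= [X in _ * X]big1 ?mulr1; last first.
    by move=> i /negbTE i_ne; rewrite /g i_ne f_sum1.
  rewrite /g eqxx (bigD1 j0) //= eqxx mulr1 big1 ?addr0 // => j /negbTE ->.
  by rewrite mulr0.
rewrite -prod_g bigA_distr_bigA; apply: eq_bigr => y _.
rewrite (bigD1 i0) //= [RHS](bigD1 i0) //= /g eqxx mulrAC; congr (_ * _ * _).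
by apply: eq_bigr => i /negbTE ->.
Qed.

Lemma sum_row_mulmx (R : comPzRingType) (m n : nat)
    (u : 'rV[R]_m) (T : 'M[R]_(m, n)) :
  (forall i, \sum_j T i j = 1) -> \sum_j (u *m T) 0 j = \sum_i u 0 i.
Proof.
move=> T_sum1; under eq_bigr do rewrite mxE.
by rewrite exchange_big; apply: eq_bigr => i _; rewrite -mulr_sumr T_sum1 mulr1.
Qed.

Lemma mul_tr_row_mx (R : comPzRingType) (m n : nat)
    (u : 'rV[R]_m) (v : 'rV[R]_n) i j :
  (u^T *m v) i j = u 0 i * v 0 j.
Proof. by rewrite mxE big_ord1 !mxE. Qed.

Lemma nbhd_center (N nv : nat) (n : 'I_N) : n \in nbhd nv n.
Proof.
have nv_lt : (nv < 2 * nv + 1)%N by rewrite addn1 ltnS mul2n -addnn leq_addr.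
rewrite inE; apply/existsP; exists (Ordinal nv_lt) => /=.
have N_gt0 : (0 < N)%N by apply: leq_ltn_trans (ltn_ord n).
by rewrite -addnA -mulSn prednK // addnC mulnC modnMDl modn_small.
Qed.

Lemma phi_sum1 (R : numFieldType) (N K nv : nat) (n : 'I_N) (x : config N K) :
  \sum_j phi (R := R) nv n x 0 j = 1.
Proof.
under eq_bigr do rewrite mxE.
rewrite -mulr_sumr exchange_big /= (eq_bigr (fun _ => 1)); last first.
  move=> i _; rewrite (bigD1 (x i)) //= eqxx big1 ?addr0 // => j.
  by rewrite eq_sym => /negbTE ->.
rewrite sumr_const mulVf // pnatr_eq0 -lt0n.
by apply/card_gt0P; exists n; apply: nbhd_center.
Qed.

Lemma trans_marginal (R : numFieldType) (N K nv : nat) (T : 'M[R]_K)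
    (x : config N K) (n : 'I_N) (k : 'I_K) :
  (forall i, \sum_j T i j = 1) ->
  \sum_y trans nv T x y * (if y n == k then 1 else 0) = (phi nv n x *m T) 0 k.
Proof.
move=> T_sum1.
rewrite -[RHS](sum_ffun_prod_indicator (f := fun m => (phi nv m x *m T) 0));
  last first.
  by move=> m; rewrite sum_row_mulmx // phi_sum1.
by apply: eq_bigr => y _; case: (y n == k).
Qed.

Lemma b_inf_A_inf (R : numFieldType) (N K nv L : nat) (T : 'M[R]_K)
    (mu0 : {ffun config N K -> R}) :
  (forall i, \sum_j T i j = 1) ->
  b_inf nv L T mu0 = A_inf nv L T mu0 *m T.
Proof.
move=> T_sum1; apply/matrixP => j k.
rewrite mxE /A_inf -scalemxAl mxE; congr (_ * _).
rewrite !mulmx_suml summxE; apply: eq_bigr => t _.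
rewrite mulmx_suml summxE; apply: eq_bigr => n _.
rewrite mulmx_suml summxE; apply: eq_bigr => x _.
rewrite -scalemxAl -mulmxA [RHS]mxE mul_tr_row_mx.
rewrite -(trans_marginal nv x n k T_sum1).
rewrite !mulr_sumr; apply: eq_bigr => y _.
by rewrite -!mulrA; congr (_ * _); rewrite mulrCA.
Qed.

Theorem lemma4p3 (R : realFieldType) (N K nv L : nat)
  (T : 'M[R]_K) (mu0 : {ffun config N K -> R}) :
  (0 < N)%N -> (0 < K)%N -> (0 < L)%N ->
  row_stochastic T -> is_distribution mu0 ->
  A_inf nv L T mu0 \in unitmx ->
  T = invmx (A_inf nv L T mu0) *m b_inf nv L T mu0.
Proof.
move=> _ _ _ [_ T_sum1] _ A_unit.
by rewrite b_inf_A_inf // mulKmx.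
Qed.
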